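(* Let $r$ and $k$ be odd positive integers such that $2^{\alpha}k\in G_r$ for all nonnegative integers $\alpha$, and let $k_1,k_2$ be relatively prime positive integers with $k_1k_2=k$. Then either $2^{\alpha}k_1\in G_r$ for all nonnegative integers $\alpha$, or $2^{\alpha}k_2\in G_r$ for all nonnegative integers $\alpha$.
   Context: For a positive integer $r$, the $r$-th Schemmel totient function $S_r:\mathbb{N}\to\mathbb{N}_0$ is the multiplicative arithmetic function (so $S_r(1)=1$ and $S_r(ab)=S_r(a)S_r(b)$ for coprime $a,b$) defined on prime powers by $S_r(p^{\alpha})=0$ if $p\le r$ and $S_r(p^\alpha)=p^{\alpha-1}(p-r)$ if $p>r$, for all primes $p$ and positive integers $\alpha$. $G_r$ denotes the set of positive integers not in the range of $S_r$. *)

From mathcomp Require Import all_boot.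
Set Implicit Arguments. Unset Strict Implicit. Unset Printing Implicit Defensive.

Definition schemmel (r n : nat) : nat :=
  \prod_(p <- primes n)
     (if p <= r then 0 else p ^ (logn p n).-1 * (p - r)).

Definition inG (r n : nat) : Prop :=
  0 < n /\ ~ (exists m, 0 < m /\ schemmel r m = n).

From mathcomp Require Import all_boot.
From Stdlib Require Import Classical.

(* The prime-power factors of S_r depend only on the exponents, so
   S_r(lcm m1 m2) S_r(gcd m1 m2) = S_r(m1) S_r(m2), and S_r preserves
   divisibility.  If S_r(m1) = 2^a k1 and S_r(m2) = 2^b k2, then S_r(gcd m1 m2)
   divides both, hence is coprime to the odd k1 while dividing 2^a k1: it is a
   power of 2, and then S_r(lcm m1 m2) = 2^c k1 k2 for some c, contradicting
   2^c k in G_r. *)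

Section SchemmelLattice.

Variable r : nat.

Definition schemmel_pfactor (p e : nat) : nat :=
  if e is e'.+1 then (if p <= r then 0 else p ^ e' * (p - r)) else 1.

Lemma schemmel_prod_range n N : 0 < n -> n < N ->
  schemmel r n = \prod_(0 <= p < N) schemmel_pfactor p (logn p n).
Proof.
move=> n_gt0 lt_nN; rewrite /schemmel.
have -> : \prod_(0 <= p < N) schemmel_pfactor p (logn p n) =
    \prod_(p <- index_iota 0 N | p \in primes n) schemmel_pfactor p (logn p n).
  rewrite [RHS]big_mkcond /=; apply: eq_bigr => p _.
  by case: ifP => // /negbT; rewrite -logn_gt0 lt0n negbK => /eqP ->.
rewrite -[RHS]big_filter.
have -> : \prod_(p <- primes n) (if p <= r then 0 else p ^ (logn p n).-1 * (p - r))
    = \prod_(p <- primes n) schemmel_pfactor p (logn p n).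
  by apply: eq_big_seq => p; rewrite -logn_gt0; case: (logn p n).
apply: perm_big; apply: uniq_perm; first exact: primes_uniq.
  by rewrite filter_uniq ?iota_uniq.
move=> p; rewrite mem_filter mem_iota add0n subn0.
case pn: (p \in primes n) => //=.
move: pn; rewrite mem_primes => /and3P [_ _ /(dvdn_leq n_gt0) le_pn].
by rewrite (leq_ltn_trans le_pn lt_nN).
Qed.

Lemma schemmel_pfactor_dvd p e f : e <= f -> schemmel_pfactor p e %| schemmel_pfactor p f.
Proof.
case: e => [|e]; first by rewrite dvd1n.
case: f => [|f] //= le_ef; case: (p <= r) => //.
by rewrite dvdn_mul ?dvdn_exp2l.
Qed.

Lemma schemmel_dvd m n : 0 < n -> m %| n -> schemmel r m %| schemmel r n.
Proof.
move=> n_gt0 dv_mn; have m_gt0 := dvdn_gt0 n_gt0 dv_mn.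
rewrite !(@schemmel_prod_range _ n.+1) ?ltnS ?(dvdn_leq n_gt0) //.
apply: (big_ind2 (fun x y => x %| y)) => // [x1 x2 y1 y2|p _]; first exact: dvdn_mul.
exact/schemmel_pfactor_dvd/dvdn_leq_log.
Qed.

Lemma schemmel_lcm_gcd m1 m2 : 0 < m1 -> 0 < m2 ->
  schemmel r (lcmn m1 m2) * schemmel r (gcdn m1 m2) = schemmel r m1 * schemmel r m2.
Proof.
move=> m1_gt0 m2_gt0; have gcd_gt0 : 0 < gcdn m1 m2 by rewrite gcdn_gt0 m1_gt0.
have le_m1N : m1 <= m1 * m2 by rewrite leq_pmulr.
have le_m2N : m2 <= m1 * m2 by rewrite leq_pmull.
have le_lcmN : lcmn m1 m2 <= m1 * m2 by rewrite -muln_lcm_gcd leq_pmulr.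
have le_gcdN : gcdn m1 m2 <= m1 * m2.
  exact: leq_trans (dvdn_leq m1_gt0 (dvdn_gcdl _ _)) le_m1N.
rewrite !(@schemmel_prod_range _ (m1 * m2).+1) ?lcmn_gt0 ?m1_gt0 //.
rewrite -!big_split /=; apply: eq_bigr => p _.
rewrite logn_lcm // logn_gcd // /maxn /minn.
by case: ltnP; rewrite // mulnC.
Qed.

Lemma schemmel_lcm_pow2_mul {m1 m2 a b k1 k2} : 0 < m1 -> 0 < m2 ->
  odd k1 -> coprime k1 k2 ->
  schemmel r m1 = 2 ^ a * k1 -> schemmel r m2 = 2 ^ b * k2 ->
  exists c, schemmel r (lcmn m1 m2) = 2 ^ c * (k1 * k2).
Proof.
move=> m1_gt0 m2_gt0 odd_k1 co_k12 S_m1 S_m2.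
have gcd_dvd1 : schemmel r (gcdn m1 m2) %| 2 ^ a * k1.
  by rewrite -S_m1 schemmel_dvd ?dvdn_gcdl.
have gcd_dvd2 : schemmel r (gcdn m1 m2) %| 2 ^ b * k2.
  by rewrite -S_m2 schemmel_dvd ?dvdn_gcdr.
have co_gcd_k1 : coprime (schemmel r (gcdn m1 m2)) k1.
  apply: coprime_dvdl gcd_dvd2 _.
  by rewrite coprimeMl coprimeXl ?coprime2n // coprime_sym.
rewrite mulnC Gauss_dvdr // in gcd_dvd1.
have /(@dvdn_pfactor 2 _ _ isT) [d le_da S_gcd] := gcd_dvd1.
exists (a + b - d); apply/eqP.
rewrite -(@eqn_pmul2r (2 ^ d)) ?expn_gt0 // -S_gcd schemmel_lcm_gcd // S_m1 S_m2.
apply/eqP; rewrite S_gcd [RHS]mulnAC -expnD subnK; first by rewrite expnD mulnACA.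
exact: leq_trans le_da (leq_addr _ _).
Qed.

End SchemmelLattice.

Theorem theorem3p4 (r k k1 k2 : nat) :
  0 < r -> odd r -> 0 < k -> odd k ->
  (forall a : nat, inG r (2 ^ a * k)) ->
  0 < k1 -> 0 < k2 -> coprime k1 k2 -> k1 * k2 = k ->
  (forall a : nat, inG r (2 ^ a * k1)) \/ (forall a : nat, inG r (2 ^ a * k2)).
Proof.
move=> _ _ _ odd_k G_k k1_gt0 k2_gt0 co_k12 def_k.
have odd_k1 : odd k1 by move: odd_k; rewrite -def_k oddM => /andP [].
case: (classic (forall a, inG r (2 ^ a * k1))) => [G_k1 | not_G_k1]; [by left | right].
move=> b; split=> [|[m2 [m2_gt0 S_m2]]]; first by rewrite muln_gt0 expn_gt0.
apply: not_G_k1 => a; split=> [|[m1 [m1_gt0 S_m1]]]; first by rewrite muln_gt0 expn_gt0.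
have [c S_lcm] := schemmel_lcm_pow2_mul r m1_gt0 m2_gt0 odd_k1 co_k12 S_m1 S_m2.
apply: (G_k c).2; exists (lcmn m1 m2).
by rewrite lcmn_gt0 m1_gt0 m2_gt0 S_lcm def_k.
Qed.
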